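(* Let $(X,\rho)$ be a metric space, $f:X\to X$ continuous, $x\in X$, $\ell\in\mathbb N$, $n\ge2$ an integer and $\varepsilon>0$. Then \[ \Lambda_\ell(x,n,\varepsilon)=\frac{n}{n-1}\Big[C_\ell(x,n,\varepsilon)-C_{\ell+1}(x,n,\varepsilon)\Big]+\delta^{N}_\ell,\qquad |\delta^N_\ell|\le\frac{2\ell}{n}. \] Consequently, if $\Lambda_\ell(x,n,\varepsilon)>0$, then, with $\delta^{\mathrm{RR}}_\ell$ satisfying $|\delta^{\mathrm{RR}}_\ell|\le 2\ell(\ell-1)/n$, \[ \mathrm{L}_\ell(x,n,\varepsilon)=\frac{\frac{n}{n-1}\big[\ell C_\ell-(\ell-1)C_{\ell+1}\big]-\frac1{n-1}+\delta^{\mathrm{RR}}_\ell}{\frac{n}{n-1}\big[C_\ell-C_{\ell+1}\big]+\delta^N_\ell}, \] where $C_\ell=C_\ell(x,n,\varepsilon)$ and $C_{\ell+1}=C_{\ell+1}(x,n,\varepsilon)$.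
   Context: Bowen metric $\rho_\ell(y,z)=\max_{0\le i<\ell}\rho(f^iy,f^iz)$; correlation sum $C_\ell(x,n,\varepsilon)=n^{-2}\#\{(i,j):0\le i,j<n,\ \rho_\ell(f^ix,f^jx)\le\varepsilon\}$. Recurrence plot $R(x,n,\varepsilon)$: $n\times n$ matrix ($0\le i,j<n$) with entry $1$ iff $\rho(f^ix,f^jx)\le\varepsilon$. A line of length $\ell$: triple $(i,j,\ell)$ with $0\le i,j\le n-\ell$, $i\ne j$, entries $(i+k,j+k)=1$ for $0\le k<\ell$, entry $(i-1,j-1)=0$ if $\min\{i,j\}>0$, entry $(i+\ell,j+\ell)=0$ if $\max\{i,j\}<n-\ell$. $N_l$ = number of lines of length exactly $l$ (boundary lines included), $\lambda_l=N_l/(n^2-n)$, $\Lambda_\ell=\sum_{l\ge\ell}\lambda_l$, $\mathrm{RR}_\ell=\sum_{l\ge\ell}l\lambda_l$, average line length $\mathrm{L}_\ell=\mathrm{RR}_\ell/\Lambda_\ell$. *)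

From HB Require Import structures.
From mathcomp Require Import all_boot all_order all_algebra.
From mathcomp Require Import reals.
Set Implicit Arguments. Unset Strict Implicit. Unset Printing Implicit Defensive.
Import Order.TTheory GRing.Theory Num.Theory.
Local Open Scope ring_scope.

Section RecDefs.
Variables (R : realType) (X : Type).

Definition is_metric (rho : X -> X -> R) : Prop :=
  [/\ forall y z, 0 <= rho y z,
      forall y z, rho y z = 0 <-> y = z,
      forall y z, rho y z = rho z y &
      forall y z w, rho y w <= rho y z + rho z w].

Definition metric_continuous (rho : X -> X -> R) (f : X -> X) : Prop :=
  forall y (e : R), 0 < e -> exists2 d : R, 0 < d &
    forall z, rho y z < d -> rho (f y) (f z) < e.

Variables (rho : X -> X -> R) (f : X -> X).

Definition bowen (l : nat) (y z : X) : R :=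
  \big[Num.max/0]_(i < l) rho (iter i f y) (iter i f z).

Definition corr_sum (x : X) (n : nat) (eps : R) (l : nat) : R :=
  (#|[pred p : 'I_n * 'I_n |
       bowen l (iter p.1 f x) (iter p.2 f x) <= eps]|)%:R / (n ^ 2)%:R.

Definition rp (x : X) (eps : R) (i j : nat) : bool :=
  rho (iter i f x) (iter j f x) <= eps.

Definition is_line (x : X) (n : nat) (eps : R) (i j l : nat) : bool :=
  [&& (i <= n - l)%N, (j <= n - l)%N, i != j,
      [forall k : 'I_l, rp x eps (i + k) (j + k)],
      (0 < minn i j)%N ==> ~~ rp x eps i.-1 j.-1 &
      (maxn i j < n - l)%N ==> ~~ rp x eps (i + l) (j + l)].

Definition Nlines (x : X) (n : nat) (eps : R) (l : nat) : nat :=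
  #|[pred p : 'I_n * 'I_n | is_line x n eps p.1 p.2 l]|.

Definition lam (x : X) (n : nat) (eps : R) (l : nat) : R :=
  (Nlines x n eps l)%:R / (n ^ 2 - n)%:R.

(* Lambda_l = sum_{l' >= l} lambda_l'  (lines have length <= n) *)
Definition Lam (x : X) (n : nat) (eps : R) (l : nat) : R :=
  \sum_(l <= l' < n.+1) lam x n eps l'.

Definition RRl (x : X) (n : nat) (eps : R) (l : nat) : R :=
  \sum_(l <= l' < n.+1) l'%:R * lam x n eps l'.

Definition Lavg (x : X) (n : nat) (eps : R) (l : nat) : R :=
  RRl x n eps l / Lam x n eps l.

End RecDefs.

(* Call (i, j), i <> j, a run start of length m when the m diagonal entries of
   the plot from (i, j) on are all 1 and fit inside the plot.  Let T_m be the
   number of lines of length >= m (= run starts of length m preceded by a 0)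
   and S_m the number of run starts of length m.  Then N_m = T_m - T_(m+1) and
   S_m = T_m + S_(m+1), because a run start that is not a line start is the
   diagonal successor of a run start of length m+1.  Telescoping gives
   (n^2 - n) Lambda_l = T_l and (n^2 - n) RR_l = l T_l + S_(l+1).  On the other
   side n^2 C_m counts the n diagonal pairs, the S_m run starts and the runs
   that overhang the bottom or right edge of the plot; there are at most
   2 (m-1) (n-1) of the latter, and they are the only source of the errors. *)

From HB Require Import structures.
From mathcomp Require Import all_boot all_order all_algebra.
From mathcomp Require Import reals.
From mathcomp Require Import zify ring lra.
Import Order.TTheory GRing.Theory Num.Theory.
Set Implicit Arguments. Unset Strict Implicit. Unset Printing Implicit Defensive.

Section Telescoping.
Variables (a b : nat -> nat) (l N : nat).
Hypothesis a_rec : forall m, l <= m -> a m = b m + a m.+1.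
Hypothesis a_vanish : forall m, N <= m -> a m = 0.

Lemma sum_telescope_partial k : l <= k -> \sum_(l <= m < k) b m + a k = a l.
Proof.
elim: k => [|k IHk]; first by rewrite leqn0 => /eqP ->; rewrite big_geq.
rewrite leq_eqVlt ltnS => /orP[/eqP <-|lk]; first by rewrite big_geq.
by rewrite big_nat_recr //= -addnA -a_rec // IHk // ltnW.
Qed.

Lemma sum_telescope : \sum_(l <= m < N) b m = a l.
Proof.
have [Nl|lN] := leqP N l; first by rewrite big_geq // a_vanish.
by rewrite -(sum_telescope_partial (ltnW lN)) a_vanish ?addn0.
Qed.

Lemma sum_abel_partial k : l <= k ->
  \sum_(l <= m < k) m * b m + k * a k = l * a l + \sum_(l.+1 <= m < k.+1) a m.
Proof.
elim: k => [|k IHk]; first by rewrite leqn0 => /eqP ->; rewrite big_geq // big_geq // addn0.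
rewrite leq_eqVlt ltnS => /orP[/eqP <-|lk]; first by rewrite big_geq // big_geq // addn0.
rewrite big_nat_recr //= [in RHS]big_nat_recr //= addnA -IHk // (a_rec lk).
rewrite mulnDr mulSn; lia.
Qed.

Lemma sum_abel :
  \sum_(l <= m < N) m * b m = l * a l + \sum_(l.+1 <= m < N) a m.
Proof.
have [Nl|lN] := leqP N l; first by rewrite a_vanish // muln0 !big_geq // ltnW.
have := sum_abel_partial (ltnW lN).
by rewrite [X in _ = _ + X -> _]big_nat_recr //= (a_vanish (leqnn N)) muln0 !addn0.
Qed.

End Telescoping.

Section DiagonalRuns.
Variables (r : rel nat) (n : nat).

Definition diag_run m i j := [forall k : 'I_m, r (i + k) (j + k)].

Definition run_start m i j := [&& i <= n - m, j <= n - m, i != j & diag_run m i j].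

Definition left_closed i j := (0 < minn i j) ==> ~~ r i.-1 j.-1.

Definition line_start m i j := run_start m i j && left_closed i j.

Definition run_overhang m i j :=
  [&& i != j, ~~ ((i <= n - m) && (j <= n - m)) & diag_run m i j].

Definition plot_sum (F : nat -> nat -> nat) := \sum_(i < n) \sum_(j < n) F i j.

Definition plot_count (P : nat -> nat -> bool) := plot_sum (fun i j => P i j).

Definition nlines_ge m := plot_count (line_start m).

Definition nruns m := plot_count (run_start m).

Definition noverhang m := plot_count (run_overhang m).

Lemma diag_runSr m i j : diag_run m.+1 i j = diag_run m i j && r (i + m) (j + m).
Proof.
apply/forallP/andP => [run|[/forallP run rm] k].
  split; last exact: run ord_max.
  by apply/forallP => k; apply: run (widen_ord (leqnSn m) k).
have [km|] := ltnP k m; first exact: run (Ordinal km).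
by move=> mk; have /eqP-> : k == m :> nat by rewrite eqn_leq mk andbT -ltnS.
Qed.

Lemma diag_runSl m i j : diag_run m.+1 i j = r i j && diag_run m i.+1 j.+1.
Proof.
apply/forallP/andP => [run|[r0 /forallP run] [[|k] km]].
- split; first by have := run ord0; rewrite !addn0.
  by apply/forallP => k; have := run (lift ord0 k); rewrite /= /bump /= !addSnnS.
- by rewrite !addn0.
- by have := run (Ordinal (km : k < m)); rewrite /= !addSnnS.
Qed.

Lemma run_startS m i j : run_start m.+1 i j -> run_start m i j.
Proof.
rewrite /run_start diag_runSr => /and4P[ri rj -> /andP[-> _]].
by rewrite !andbT; apply/andP; split; lia.
Qed.

Lemma line_startS m i j : line_start m.+1 i j -> line_start m i j.
Proof. by rewrite /line_start => /andP[/run_startS -> ->]. Qed.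

Lemma run_start_ge m i j : n <= m -> run_start m i j = false.
Proof. by move=> nm; apply/and4P=> [[ri rj /eqP ij _]]; lia. Qed.

Lemma run_start_shift m i j :
  run_start m i.+1 j.+1 && ~~ left_closed i.+1 j.+1 = run_start m.+1 i j.
Proof.
rewrite /run_start /left_closed diag_runSl minnSS /= negbK eqSS.
by case: (r i j) (diag_run m i.+1 j.+1) => [] []; rewrite ?andbF ?andbT //; lia.
Qed.

Lemma plot_sum_shift (F G : nat -> nat -> nat) :
  (forall k, F 0 k = 0) -> (forall k, F k 0 = 0) ->
  (forall k, G n.-1 k = 0) -> (forall k, G k n.-1 = 0) ->
  (forall i j, F i.+1 j.+1 = G i j) -> plot_sum F = plot_sum G.
Proof.
rewrite /plot_sum; case: n => [|N] F0k Fk0 GNk GkN FG; first by rewrite !big_ord0.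
rewrite big_ord_recl [X in X + _]big1 // add0n.
rewrite big_ord_recr /= [X in _ = _ + X]big1 ?addn0 //.
apply: eq_bigr => i _; rewrite big_ord_recl Fk0 add0n big_ord_recr /= GkN addn0.
by apply: eq_bigr => j _; apply: FG.
Qed.

Lemma eq_plot_sum (F G : nat -> nat -> nat) :
  (forall i j, F i j = G i j) -> plot_sum F = plot_sum G.
Proof. by move=> FG; apply: eq_bigr => i _; apply: eq_bigr => j _. Qed.

Lemma plot_sumD (F G : nat -> nat -> nat) :
  plot_sum (fun i j => F i j + G i j) = plot_sum F + plot_sum G.
Proof. by rewrite /plot_sum -big_split; apply: eq_bigr => i _; rewrite big_split. Qed.

Lemma plot_sum_le (F G : nat -> nat -> nat) :
  (forall i j, F i j <= G i j) -> plot_sum F <= plot_sum G.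
Proof. by move=> FG; apply: leq_sum => i _; apply: leq_sum => j _. Qed.

Lemma plot_count_split (P Q : nat -> nat -> bool) :
  plot_count P = plot_count (fun i j => P i j && Q i j)
               + plot_count (fun i j => P i j && ~~ Q i j).
Proof.
by rewrite -plot_sumD; apply: eq_plot_sum => i j; case: (P i j) (Q i j) => [] [].
Qed.

Lemma nrunsS m : 0 < m -> nruns m = nlines_ge m + nruns m.+1.
Proof.
move=> m_gt0; rewrite /nruns (plot_count_split _ (left_closed)); congr (_ + _).
apply: plot_sum_shift => [k|k|k|k|i j]; last by rewrite run_start_shift.
- by rewrite /left_closed min0n andbF.
- by rewrite /left_closed minn0 andbF.
- by rewrite /run_start; case: (diag_run _ _ _); rewrite ?andbF //=; lia.
- by rewrite /run_start; case: (diag_run _ _ _); rewrite ?andbF //=; lia.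
Qed.

Lemma nlines_geS m :
  nlines_ge m = plot_count (fun i j => line_start m i j && ~~ line_start m.+1 i j)
              + nlines_ge m.+1.
Proof.
rewrite /nlines_ge (plot_count_split _ (line_start m.+1)) addnC; congr (_ + _).
apply: eq_plot_sum => i j.
by case: (boolP (line_start m.+1 i j)) => [/line_startS ->|]; rewrite ?andbF.
Qed.

Lemma nruns_ge m : n <= m -> nruns m = 0.
Proof. by move=> nm; apply: big1 => i _; apply: big1 => j _; rewrite run_start_ge. Qed.

Lemma nlines_ge_ge m : n <= m -> nlines_ge m = 0.
Proof.
by move=> nm; apply: big1 => i _; apply: big1 => j _; rewrite /line_start run_start_ge.
Qed.

Lemma plot_count_diag : plot_count (fun i j => i == j) = n.
Proof.
rewrite /plot_count /plot_sum -[RHS]card_ord -sum1_card; apply: eq_bigr => i _.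
by rewrite (bigD1 i) //= eqxx big1 // => j ji; apply/eqP; rewrite eqb0 eq_sym.
Qed.

Lemma count_diag_run m : reflexive r ->
  plot_count (diag_run m) = n + nruns m + noverhang m.
Proof.
move=> r_refl; rewrite -plot_count_diag -!plot_sumD; apply: eq_plot_sum => i j.
rewrite /run_start /run_overhang; case: eqVneq => [<-|_] /=.
  have -> : diag_run m i i by apply/forallP => k; apply: r_refl.
  by rewrite !andbF.
by case: (diag_run m i j); rewrite ?andbF ?andbT //; case: (_ <= _) (_ <= _) => [] [].
Qed.

Lemma sum_neq (i : 'I_n) : \sum_(j < n) (i != j :> nat) = n.-1.
Proof.
rewrite -[n in RHS]card_ord -(cardC1 i) -sum1_card [RHS]big_mkcond /=.
by apply: eq_bigr => j _; rewrite !inE eq_sym.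
Qed.

Lemma count_tail m : 0 < m -> \sum_(i < n) (n - m < i) <= m - 1.
Proof.
move=> m_gt0; rewrite -(big_mkord xpredT (fun i => n - m < i : nat)).
rewrite (big_cat_nat (n := n - (m - 1))) ?leq_subr //= big_nat_cond.
rewrite big1 => [|i]; last first.
  by case/andP=> /andP[_ i_lt] _; apply/eqP; rewrite eqb0 -leqNgt; lia.
rewrite add0n (@leq_trans (\sum_(n - (m - 1) <= i < n) 1)) //.
  by apply: leq_sum => i _; apply: leq_b1.
by rewrite sum_nat_const_nat muln1; lia.
Qed.

Lemma noverhang_le m : 0 < m -> noverhang m <= 2 * (m - 1) * (n - 1).
Proof.
move=> m_gt0; set tail := plot_sum (fun i j => (n - m < i) * (i != j)).
have tail_le : tail <= (m - 1) * (n - 1).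
  rewrite /tail /plot_sum (eq_bigr (fun i : 'I_n => (n - m < i) * n.-1)) => [|i _].
    by rewrite -big_distrl /= -subn1 leq_mul2r count_tail ?orbT.
  by rewrite -big_distrr sum_neq.
have tail_sym : plot_sum (fun i j => (n - m < j) * (j != i)) = tail.
  by rewrite /plot_sum exchange_big.
apply: (@leq_trans (tail + tail)); last by rewrite -mulnA mul2n -addnn leq_add.
rewrite -[X in _ <= _ + X]tail_sym -plot_sumD; apply: plot_sum_le => i j.
rewrite /run_overhang eq_sym; case: (diag_run m i j); rewrite ?andbF //; lia.
Qed.

Lemma card_plot_pairs (P : nat -> nat -> bool) :
  #|[pred p : 'I_n * 'I_n | P p.1 p.2]| = plot_count P.
Proof.
rewrite /plot_count /plot_sum pair_big /= -sum1_card big_mkcond /=.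
by apply: eq_bigr => p _; rewrite inE; case: (P _ _).
Qed.

End DiagonalRuns.

Lemma noverhang_bound (R : numDomainType) (r : rel nat) n m : 0 < m -> 0 < n ->
  (0 <= ((noverhang r n m)%:R : R) <= 2 * (m%:R - 1) * (n%:R - 1))%R.
Proof.
move=> m_gt0 n_gt0; rewrite ler0n /=; have := noverhang_le r n m_gt0.
by rewrite -(ler_nat R) !natrM !natrB ?mulr1n.
Qed.

Section RecurrencePlot.
Variables (R : realType) (X : Type) (rho : X -> X -> R) (f : X -> X) (x : X) (eps : R).
Local Notation r := (rp rho f x eps).
Local Open Scope ring_scope.

Lemma rp_refl : (forall y, rho y y = 0) -> 0 <= eps -> reflexive r.
Proof. by move=> rho_yy eps_ge0 i; rewrite /rp rho_yy. Qed.

Lemma bowen_le_diag_run m i j : 0 <= eps ->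
  (bowen rho f m (iter i f x) (iter j f x) <= eps) = diag_run r m i j.
Proof.
move=> eps_ge0; apply/bigmax_leP/forallP => [[_ close] k|run]; last split => // k _.
  by have := close k isT; rewrite /rp addnC (addnC j) !iterD.
by have := run k; rewrite /rp addnC (addnC j) !iterD.
Qed.

Lemma is_lineE n m i j :
  is_line rho f x n eps i j m = line_start r n m i j && ~~ line_start r n m.+1 i j.
Proof.
rewrite /is_line /line_start /run_start diag_runSr.
rewrite -/(diag_run r m i j) -/(left_closed r i j).
by case: (diag_run r m i j) (r (i + m) (j + m)) (left_closed r i j) => [] [] [];
  rewrite ?andbF ?andbT //=; lia.
Qed.

Lemma nlines_ge_Nlines n m :
  nlines_ge r n m = Nlines rho f x n eps m + nlines_ge r n m.+1.
Proof.
rewrite nlines_geS /Nlines (card_plot_pairs _ (fun a b => is_line rho f x n eps a b m)).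
congr (_ + _).
by apply: eq_plot_sum => i j; rewrite is_lineE.
Qed.

Lemma corr_sum_runs n m : 0 <= eps -> reflexive r ->
  corr_sum rho f x n eps m
  = (n%:R + (nruns r n m)%:R + (noverhang r n m)%:R) / n%:R ^+ 2.
Proof.
move=> eps_ge0 r_refl; rewrite /corr_sum -!natrD -natrX -count_diag_run //.
rewrite (card_plot_pairs _ (fun a b => bowen rho f m (iter a f x) (iter b f x) <= eps)).
by congr (_%:R / _); apply: eq_plot_sum => i j; rewrite bowen_le_diag_run.
Qed.

Lemma natr_plot_size n : (n ^ 2 - n)%:R = n%:R ^+ 2 - n%:R :> R.
Proof. by rewrite natrB ?natrX // expnS expn1; nia. Qed.

Lemma Lam_nlines_ge n l :
  Lam rho f x n eps l = (nlines_ge r n l)%:R / (n%:R ^+ 2 - n%:R).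
Proof.
rewrite /Lam /lam -mulr_suml -natr_sum natr_plot_size.
rewrite (sum_telescope (fun m _ => nlines_ge_Nlines n m)) // => m.
by move/ltnW; apply: nlines_ge_ge.
Qed.

Lemma RRl_nlines_ge n l : (0 < l)%N ->
  RRl rho f x n eps l
  = (l%:R * (nlines_ge r n l)%:R + (nruns r n l.+1)%:R) / (n%:R ^+ 2 - n%:R).
Proof.
move=> l_gt0; rewrite /RRl /lam; under eq_bigr do rewrite mulrA -natrM.
rewrite -mulr_suml -natr_sum natr_plot_size -natrM -natrD.
rewrite (sum_abel (fun m _ => nlines_ge_Nlines n m)) => [|m /ltnW]; last first.
  exact: nlines_ge_ge.
rewrite (sum_telescope (a := nruns r n) (b := nlines_ge r n)) // => m.
- by move=> lm; apply: nrunsS; apply: leq_trans lm.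
- by move/ltnW; apply: nruns_ge.
Qed.

End RecurrencePlot.

Section CorrelationIdentities.
Variables (R : realFieldType) (n l t s e0 e1 : R).
Local Open Scope ring_scope.
Hypotheses (n_neq0 : n != 0) (n_neq1 : n != 1).

Lemma plot_sizeE : n ^+ 2 - n = n * (n - 1).
Proof. by ring. Qed.

Let n1_neq0 : n - 1 != 0. Proof. by rewrite subr_eq0. Qed.
Let C0 := (n + (t + s) + e0) / n ^+ 2.
Let C1 := (n + s + e1) / n ^+ 2.

Lemma ratio_correlation_identity :
  t / (n ^+ 2 - n) = n / (n - 1) * (C0 - C1) + (e1 - e0) / (n ^+ 2 - n).
Proof. by rewrite /C0 /C1 plot_sizeE; field; rewrite n_neq0 n1_neq0. Qed.

Lemma weighted_ratio_correlation_identity :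
  (l * t + s) / (n ^+ 2 - n) = n / (n - 1) * (l * C0 - (l - 1) * C1) - 1 / (n - 1)
                               + ((l - 1) * e1 - l * e0) / (n ^+ 2 - n).
Proof. by rewrite /C0 /C1 plot_sizeE; field; rewrite n_neq0 n1_neq0. Qed.

End CorrelationIdentities.

Section OverhangBounds.
Variables (R : realFieldType) (n : R).
Local Open Scope ring_scope.

Lemma ler_norm_div_plot_size (e c : R) : 1 < n -> `|e| <= c * (n - 1) ->
  `|e / (n ^+ 2 - n)| <= c / n.
Proof.
move=> n_gt1 e_le; have D_gt0 : 0 < n * (n - 1) by apply: mulr_gt0; lra.
rewrite plot_sizeE normrM normfV (gtr0_norm D_gt0) ler_pdivrMr //.
by rewrite mulrA divfK //; lra.
Qed.

Lemma overhang_difference_bound (l e0 e1 : R) : 1 < n ->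
  0 <= e0 <= 2 * (l - 1) * (n - 1) -> 0 <= e1 <= 2 * l * (n - 1) ->
  `|(e1 - e0) / (n ^+ 2 - n)| <= 2 * l / n.
Proof.
move=> n_gt1 /andP[e0_ge0 e0_le] /andP[e1_ge0 e1_le].
by apply: ler_norm_div_plot_size => //; rewrite ler_norml; apply/andP; split; nra.
Qed.

Lemma weighted_overhang_difference_bound (l e0 e1 : R) : 1 < n -> 1 <= l ->
  0 <= e0 <= 2 * (l - 1) * (n - 1) -> 0 <= e1 <= 2 * l * (n - 1) ->
  `|((l - 1) * e1 - l * e0) / (n ^+ 2 - n)| <= 2 * l * (l - 1) / n.
Proof.
move=> n_gt1 l_ge1 /andP[e0_ge0 e0_le] /andP[e1_ge0 e1_le].
by apply: ler_norm_div_plot_size => //; rewrite ler_norml; apply/andP; split; nra.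
Qed.

End OverhangBounds.

Local Open Scope ring_scope.

Theorem mainTheorem8 (R : realType) (X : Type) (rho : X -> X -> R)
  (f : X -> X) (x : X) (l n : nat) (eps : R) :
  is_metric rho -> metric_continuous rho f ->
  (1 <= l)%N -> (2 <= n)%N -> 0 < eps ->
  let Cl := corr_sum rho f x n eps l in
  let Cl1 := corr_sum rho f x n eps l.+1 in
  exists dN : R,
    Lam rho f x n eps l = n%:R / (n%:R - 1) * (Cl - Cl1) + dN /\
    `|dN| <= 2 * l%:R / n%:R /\
    (0 < Lam rho f x n eps l ->
      exists dRR : R,
        `|dRR| <= 2 * l%:R * (l%:R - 1) / n%:R /\
        Lavg rho f x n eps l =
          (n%:R / (n%:R - 1) * (l%:R * Cl - (l%:R - 1) * Cl1)
             - 1 / (n%:R - 1) + dRR)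
          / (n%:R / (n%:R - 1) * (Cl - Cl1) + dN)).
Proof.
move=> [_ rho_eq0 _ _] _ l_gt0 n_ge2 /ltW eps_ge0 Cl Cl1.
pose r := rp rho f x eps.
have r_refl : reflexive r by apply: rp_refl => // y; apply/rho_eq0.
pose t := nlines_ge r n l; pose s := nruns r n l.+1.
pose e0 := noverhang r n l; pose e1 := noverhang r n l.+1.
have n_gt1 : 1 < n%:R :> R by rewrite ltr1n.
have [n_neq0 n_neq1] : n%:R != 0 :> R /\ n%:R != 1 :> R by split; apply/eqP; lra.
have ClE : Cl = (n%:R + (t%:R + s%:R) + e0%:R) / n%:R ^+ 2.
  by rewrite /Cl corr_sum_runs // nrunsS // natrD.
have Cl1E : Cl1 = (n%:R + s%:R + e1%:R) / n%:R ^+ 2 by rewrite /Cl1 corr_sum_runs.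
have e0_bound := noverhang_bound R r l_gt0 (ltnW n_ge2).
have e1_bound : 0 <= (e1%:R : R) <= 2 * l%:R * (n%:R - 1).
  by have := noverhang_bound R r (ltn0Sn l) (ltnW n_ge2); rewrite -(natr1 l) addrK.
pose dN : R := (e1%:R - e0%:R) / (n%:R ^+ 2 - n%:R).
have LamE : Lam rho f x n eps l = n%:R / (n%:R - 1) * (Cl - Cl1) + dN.
  by rewrite Lam_nlines_ge ClE Cl1E; apply: ratio_correlation_identity.
exists dN; split=> //; split; first exact: overhang_difference_bound.
move=> _; exists (((l%:R - 1) * e1%:R - l%:R * e0%:R) / (n%:R ^+ 2 - n%:R)).
split; first by apply: weighted_overhang_difference_bound; rewrite // ler1n.
rewrite /Lavg -LamE RRl_nlines_ge // ClE Cl1E.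
by congr (_ / _); apply: weighted_ratio_correlation_identity.
Qed.
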